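(* Let $\mathbf{X}\sim\mathcal{MSP}(\boldsymbol{\mu},\mathbf{K})$ be a $p$-variate $L^2$-continuous process on a compact interval $\mathcal{T}$, $P=\{1,\dots,p\}$, and let $(\pi_i,\boldsymbol{\psi}_i)$, $i=1,\dots,M$, be the $M$ largest eigenpairs of its covariance operator with $\pi_M>0$; write $\psi_{i,k}=\boldsymbol{\psi}_i'\mathbf{e}_k$. For $S\subseteq P$ let $\hat{\mathbf{X}}^S=(\hat X^S_1,\dots,\hat X^S_p)'$ with $\hat X^S_j=X_j$ if $j\in S$ and $\hat X^S_j=\mu_j$ if $j\notin S$, and let $\Delta_k\mathrm{fMMD}^2(\hat{\mathbf{X}}^S,\boldsymbol{\mu};\mathbf{K},M)=\mathrm{fMMD}^2(\hat{\mathbf{X}}^{S\cup\{k\}},\boldsymbol{\mu};\mathbf{K},M)-\mathrm{fMMD}^2(\hat{\mathbf{X}}^S,\boldsymbol{\mu};\mathbf{K},M)$. Then $$\theta_k(\mathbf{X},\boldsymbol{\mu};\mathbf{K},M):=\sum_{S\subseteq P\setminus\{k\}}\frac{|S|!(p-|S|-1)!}{p!}\Delta_k\mathrm{fMMD}^2(\hat{\mathbf{X}}^S,\boldsymbol{\mu};\mathbf{K},M)=\sum_{i=1}^M\frac{1}{\pi_i}\langle X_k-\mu_k,\psi_{i,k}\rangle\langle\mathbf{X}-\boldsymbol{\mu},\boldsymbol{\psi}_i\rangle.$$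
   Context: $\mathcal{H}=L^2(\mathcal{T})^p$ with $\langle\mathbf{x},\mathbf{y}\rangle=\sum_j\int_{\mathcal{T}}x_jy_j$; for scalar functions $\langle f,g\rangle=\int_{\mathcal{T}}fg$. $\mathbf{X}\sim\mathcal{MSP}(\boldsymbol{\mu},\mathbf{K})$: mean $\boldsymbol{\mu}(t)=E\mathbf{X}(t)$, covariance kernel $\mathbf{K}(s,t)=[\mathrm{Cov}(X_i(s),X_j(t))]$, covariance operator $\mathcal{C}\mathbf{x}(s)=\int\mathbf{K}(s,t)\mathbf{x}(t)dt$ with orthonormal eigenfunctions $\boldsymbol{\psi}_i$ and nonincreasing eigenvalues $\pi_i$. $\mathrm{fMMD}^2(\mathbf{Y},\boldsymbol{\mu};\mathbf{K},M)=\sum_{i=1}^M\pi_i^{-1}\langle\mathbf{Y}-\boldsymbol{\mu},\boldsymbol{\psi}_i\rangle^2$. $\mathbf{e}_k$ is the $k$th canonical basis vector of $\mathbb{R}^p$. *)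

From HB Require Import structures.
From mathcomp Require Import all_boot all_order all_algebra.
From mathcomp Require Import all_classical all_reals all_analysis.
Set Implicit Arguments. Unset Strict Implicit. Unset Printing Implicit Defensive.
Import Order.TTheory GRing.Theory Num.Theory.
Import numFieldNormedType.Exports.
Local Open Scope classical_set_scope.
Local Open Scope ring_scope.

Section Defs.
Variable R : realType.
Notation leb := (@lebesgue_measure R).

Definition Tint (a b : R) : set R := `[a, b].

Definition L2on (a b : R) (f : R -> R) : Prop :=
  measurable_fun (Tint a b) f /\
  leb.-integrable (Tint a b) (fun t => ((f t) ^+ 2)%:E).

Definition ip (a b : R) (f g : R -> R) : R :=
  Rintegral leb (Tint a b) (fun t => f t * g t).

Definition ipH (a b : R) (p : nat) (x y : 'I_p -> R -> R) : R :=
  \sum_(j < p) ip a b (x j) (y j).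

Definition subH (p : nat) (x y : 'I_p -> R -> R) : 'I_p -> R -> R :=
  fun j t => x j t - y j t.

Definition fMMD2 (a b : R) (p M : nat) (pi : 'I_M -> R)
  (psi : 'I_M -> 'I_p -> R -> R) (Y mu : 'I_p -> R -> R) : R :=
  \sum_(i < M) (pi i)^-1 * (ipH a b (subH Y mu) (psi i)) ^+ 2.

Definition Xhat (p : nat) (S : {set 'I_p}) (X mu : 'I_p -> R -> R) :
  'I_p -> R -> R := fun j => if j \in S then X j else mu j.

Definition theta (a b : R) (p M : nat) (pi : 'I_M -> R)
  (psi : 'I_M -> 'I_p -> R -> R) (k : 'I_p) (X mu : 'I_p -> R -> R) : R :=
  \sum_(S : {set 'I_p} | k \notin S)
    ((factorial #|S| * factorial (p - #|S| - 1))%:R / (factorial p)%:R) *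
    (fMMD2 a b pi psi (Xhat (k |: S) X mu) mu - fMMD2 a b pi psi (Xhat S X mu) mu).

Section Process.
Context {d : measure_display} {Omega : measurableType d}.
Variable P : probability Omega R.
Variable p : nat.
Variable X : Omega -> 'I_p -> R -> R.

Definition meanf : 'I_p -> R -> R :=
  fun j t => Rintegral P setT (fun w => X w j t).

Definition covK (j l : 'I_p) (s t : R) : R :=
  Rintegral P setT (fun w => (X w j s - meanf j s) * (X w l t - meanf l t)).

Definition covop (a b : R) (x : 'I_p -> R -> R) : 'I_p -> R -> R :=
  fun j s => \sum_(l < p) Rintegral leb (Tint a b) (fun t => covK j l s t * x l t).

Definition second_order : Prop :=
  forall j t, measurable_fun setT (fun w => X w j t) /\
    P.-integrable setT (fun w => ((X w j t) ^+ 2)%:E).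

Definition L2_continuous (a b : R) : Prop :=
  forall (j : 'I_p) (t0 e : R), t0 \in Tint a b -> 0 < e ->
    exists2 dl : R, 0 < dl & forall t, t \in Tint a b -> `|t - t0| < dl ->
      Rintegral P setT (fun w => (X w j t - X w j t0) ^+ 2) < e.

Definition paths_in_H (a b : R) : Prop :=
  forall w j, L2on a b (X w j).

Definition is_eigen (a b : R) (lam : R) (phi : 'I_p -> R -> R) : Prop :=
  (forall j, L2on a b (phi j)) /\
  forall j, {ae leb, forall s, Tint a b s -> covop a b phi j s = lam * phi j s}.

(* (pi_i, psi_i), i < M, are the M largest eigenpairs (orthonormal
   eigenfunctions, nonincreasing eigenvalues, and no other eigenvalue with an
   eigenfunction orthogonal to all psi_i exceeds pi_M) *)
Definition top_eigenpairs (a b : R) (M : nat) (pi : 'I_M -> R)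
    (psi : 'I_M -> 'I_p -> R -> R) : Prop :=
  [/\ forall i, is_eigen a b (pi i) (psi i),
      forall i i', ipH a b (psi i) (psi i') = (i == i')%:R,
      forall i i' : 'I_M, (i <= i')%N -> pi i' <= pi i &
      forall (lam : R) (phi : 'I_p -> R -> R), is_eigen a b lam phi ->
        ipH a b phi phi != 0 -> (forall i, ipH a b phi (psi i) = 0) ->
        forall i : 'I_M, i.+1 = M -> lam <= pi i].

End Process.
End Defs.

(* The projections onto the eigenfunctions turn fMMD^2 of X^S into a sum, over i, of pi_i^-1 times
   the square of an additive set function, c_i(S) = sum_(j in S) <X_j - mu_j, psi_(i,j)>, because the
   components outside S vanish.  The Shapley value is linear in the game, so it suffices to compute
   it for the game S |-> (sum_(j in S) v_j)^2.  Its marginal contribution at k is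
   v_k^2 + 2 v_k sum_(j in S) v_j; the Shapley weights sum to 1, and for j <> k the coalitions
   containing j carry exactly half of the weight, since flipping every player but k maps coalitions
   containing j onto coalitions missing j and preserves the weights.  Hence the Shapley value is
   v_k^2 + 2 v_k (1/2) sum_(j <> k) v_j = v_k sum_j v_j. *)
From HB Require Import structures.
From mathcomp Require Import all_boot all_order all_algebra.
From mathcomp Require Import all_classical all_reals all_analysis.
From mathcomp Require Import ring zify.
Set Implicit Arguments. Unset Strict Implicit. Unset Printing Implicit Defensive.
Import Order.TTheory GRing.Theory Num.Theory.
Local Open Scope ring_scope.

Section Shapley.
Variables (R : numFieldType) (p : nat).
Implicit Types (S : {set 'I_p}) (k j : 'I_p).

Definition shapley_weight S : R :=
  (factorial #|S| * factorial (p - #|S| - 1))%:R / (factorial p)%:R.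

Definition shapley (v : {set 'I_p} -> R) k : R :=
  \sum_(S : {set 'I_p} | k \notin S) shapley_weight S * (v (k |: S) - v S).

Lemma shapley_sum I (r : seq I) (c : I -> R) (v : I -> {set 'I_p} -> R) k :
  shapley (fun S => \sum_(i <- r) c i * v i S) k = \sum_(i <- r) c i * shapley (v i) k.
Proof.
rewrite /shapley; under eq_bigr => S _ do rewrite -sumrB big_distrr.
rewrite exchange_big /=; apply: eq_bigr => i _.
by rewrite big_distrr /=; apply: eq_bigr => S _; ring.
Qed.

Lemma card_lt_notin S k : k \notin S -> (#|S| < p)%N.
Proof.
move=> kS; have : (0 < #|~: S|)%N by apply/card_gt0P; exists k; rewrite inE.
by have := cardsC S; rewrite card_ord; lia.
Qed.

Lemma subsetC1 S k : (S \subset [set~ k]) = (k \notin S).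
Proof. by rewrite finset.subsetC finset.sub1set inE. Qed.

Lemma sum_shapley_weight k : \sum_(S : {set 'I_p} | k \notin S) shapley_weight S = 1.
Proof.
have p_gt0 : (0 < p)%N by apply: leq_ltn_trans (ltn_ord k).
(* Group the coalitions by size: 'C(p-1, s) of them have size s, each of weight s! (p-1-s)! / p!. *)
rewrite (partition_big (fun S => insubd k #|S|) predT) //=.
have layer (s : 'I_p) :
    \sum_(S : {set 'I_p} | (k \notin S) && (insubd k #|S| == s)) shapley_weight S =
    (factorial p.-1)%:R / (factorial p)%:R.
  rewrite (eq_bigl (fun S => S \in [set S : {set 'I_p} | S \subset [set~ k] & #|S| == s])); last first.
    move=> S; rewrite !inE subsetC1; case: (boolP (k \in S)) => //= kS.
    by rewrite -val_eqE /= (insubdK k (card_lt_notin kS)).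
  rewrite (eq_bigr (fun=> (factorial s * factorial (p - s - 1))%:R / (factorial p)%:R)); last first.
    by move=> S; rewrite finset.in_set => /andP[_ /eqP <-].
  rewrite sumr_const cards_draws cardsC1 card_ord.
  have s_le : (s <= p.-1)%N by rewrite -ltnS prednK.
  by rewrite -mulrnAl -mulrnA mulnC subnAC subn1 bin_fact.
have fact_p : (factorial p.-1 * p)%N = factorial p.
  by rewrite mulnC -{1}(prednK p_gt0) -factS prednK.
rewrite (eq_bigr _ (fun s _ => layer s)) sumr_const card_ord -mulrnAl -mulrnA fact_p.
by rewrite divff // pnatr_eq0 -lt0n fact_gt0.
Qed.

Definition setC_but k S : {set 'I_p} := [set x | (x \in S) == (x == k)].

Lemma setC_butK k : involutive (setC_but k).
Proof. by move=> S; apply/setP => x; rewrite !inE; case: (x \in S); case: (x == k). Qed.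

Lemma mem_setC_but k S j : (j \in setC_but k S) = if j == k then j \in S else j \notin S.
Proof. by rewrite inE; case: (j == k); case: (j \in S). Qed.

Lemma shapley_weight_setC_but k S : k \notin S -> shapley_weight (setC_but k S) = shapley_weight S.
Proof.
move=> kS; have S_lt := card_lt_notin kS.
have -> : setC_but k S = ~: S :\ k.
  apply/setP => x; rewrite mem_setC_but !inE.
  by have [->|xk] := eqVneq x k; rewrite ?eqxx ?(negbTE kS) ?(negbTE xk).
have cardC : #|~: S :\ k| = (p - #|S| - 1)%N.
  have := cardsC S; rewrite (cardsD1 k (~: S)) inE kS card_ord => E.
  by rewrite -[X in (X - _ - _)%N]E !addKn.
rewrite /shapley_weight cardC.
have -> : (p - (p - #|S| - 1) - 1)%N = #|S| by lia.
by rewrite mulnC.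
Qed.

Lemma sum_shapley_weight_mem k j : j != k ->
  \sum_(S : {set 'I_p} | (k \notin S) && (j \in S)) shapley_weight S = 2^-1.
Proof.
move=> jk.
have half : \sum_(S : {set 'I_p} | (k \notin S) && (j \in S)) shapley_weight S =
            \sum_(S : {set 'I_p} | (k \notin S) && (j \notin S)) shapley_weight S.
  rewrite (reindex_inj (can_inj (setC_butK k))) /=.
  apply: eq_big => S; first by rewrite !mem_setC_but eqxx (negbTE jk).
  by rewrite mem_setC_but eqxx => /andP[kS _]; rewrite shapley_weight_setC_but.
have := sum_shapley_weight k; rewrite (bigID (fun S => j \in S)) /= -half => sum2.
have two_neq0 : (2 : R) != 0 by rewrite pnatr_eq0.
by apply: (mulfI two_neq0); rewrite divff // mulr_natl mulr2n.
Qed.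

Lemma sum_shapley_weight_additive (v : 'I_p -> R) k :
  \sum_(S : {set 'I_p} | k \notin S) shapley_weight S * \sum_(j in S) v j =
  2^-1 * \sum_(j | j != k) v j.
Proof.
under eq_bigr => S _ do rewrite big_distrr big_mkcond /=.
rewrite exchange_big (bigD1 k) //= big1 ?add0r; last by move=> S /negbTE ->.
rewrite big_distrr; apply: eq_bigr => j jk.
by rewrite -big_mkcondr -big_distrl /= sum_shapley_weight_mem.
Qed.

Lemma shapley_sqr_additive (v : 'I_p -> R) k :
  shapley (fun S => (\sum_(j in S) v j) ^+ 2) k = v k * \sum_j v j.
Proof.
have marginal S : k \notin S ->
    shapley_weight S * ((\sum_(j in k |: S) v j) ^+ 2 - (\sum_(j in S) v j) ^+ 2) =
    v k ^+ 2 * shapley_weight S + 2 * v k * (shapley_weight S * \sum_(j in S) v j).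
  by move=> kS; rewrite big_setU1 //=; ring.
rewrite /shapley (eq_bigr _ marginal) big_split /= -big_distrr -big_distrr /=.
rewrite sum_shapley_weight sum_shapley_weight_additive [in RHS](bigD1 k) //=.
by field.
Qed.

End Shapley.

Lemma ip_eq0l (R : realType) (a b : R) (f g : R -> R) :
  (forall t, f t = 0) -> ip a b f g = 0.
Proof. by move=> f0; rewrite /ip /Rintegral integral0_eq //= => t _; rewrite f0 mul0r. Qed.

Lemma ipH_Xhat (R : realType) (a b : R) (p : nat) (S : {set 'I_p}) (X mu psi : 'I_p -> R -> R) :
  ipH a b (subH (Xhat S X mu) mu) psi = \sum_(j in S) ip a b (subH X mu j) (psi j).
Proof.
rewrite /ipH [RHS]big_mkcond; apply: eq_bigr => j _; rewrite /subH /Xhat.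
by case: (j \in S) => //; apply: ip_eq0l => t; rewrite subrr.
Qed.

Lemma fMMD2_Xhat (R : realType) (a b : R) (p M : nat) (pi : 'I_M -> R)
    (psi : 'I_M -> 'I_p -> R -> R) (S : {set 'I_p}) (X mu : 'I_p -> R -> R) :
  fMMD2 a b pi psi (Xhat S X mu) mu =
  \sum_(i < M) (pi i)^-1 * (\sum_(j in S) ip a b (subH X mu j) (psi i j)) ^+ 2.
Proof. by apply: eq_bigr => i _; rewrite ipH_Xhat. Qed.

Theorem proposition3 (R : realType) (d : measure_display) (Omega : measurableType d)
  (P : probability Omega R) (p : nat) (X : Omega -> 'I_p -> R -> R)
  (a b : R) (M : nat) (pi : 'I_M -> R) (psi : 'I_M -> 'I_p -> R -> R)
  (k : 'I_p) :
  a < b ->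
  second_order P X ->
  L2_continuous P X a b ->
  paths_in_H X a b ->
  (0 < M)%N ->
  top_eigenpairs P X a b pi psi ->
  (forall i : 'I_M, i.+1 = M -> 0 < pi i) ->
  forall w : Omega,
    theta a b pi psi k (X w) (meanf P X) =
    \sum_(i < M) (pi i)^-1 * ip a b (X w k - meanf P X k) (psi i k) *
                 ipH a b (subH (X w) (meanf P X)) (psi i).
Proof.
move=> _ _ _ _ _ _ _ w.
set mu := meanf P X.
transitivity (shapley (fun S => fMMD2 a b pi psi (Xhat S (X w) mu) mu) k); first by [].
rewrite (funext (fun S => fMMD2_Xhat a b pi psi S (X w) mu)) shapley_sum.
by apply: eq_bigr => i _; rewrite shapley_sqr_additive mulrA.
Qed.
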